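(* Let $\mathfrak a=\mathbb H^p$ and $V=\mathrm{Span}(J_1,J_2,J_3)$ with $J_1=\mathrm{diag}(\lambda_1L_{\mathrm i},\dots,\lambda_pL_{\mathrm i})$, $J_2=\mathrm{diag}(\mu_1L_{\mathrm j},\dots,\mu_pL_{\mathrm j})$, $J_3=\mathrm{diag}(\mu_1L_{\mathrm k},\dots,\mu_pL_{\mathrm k})$, where all $\lambda_s,\mu_s\in\mathbb R$ are nonzero. Let $\langle\cdot,\cdot\rangle$ be an inner product on $V$ for which $J_1,J_2,J_3$ are mutually orthogonal and $\|J_2\|=\|J_3\|$. Then $(V,\langle\cdot,\cdot\rangle)$ is a WS-pair.
   Context: $\mathbb H$ denotes the quaternions, $\mathrm i,\mathrm j,\mathrm k$ the standard basis of $\mathrm{Im}\,\mathbb H$, $L_q$ left multiplication by $q$, and $\mathrm{diag}$ block-diagonal operators on $\mathbb H^p$. For a Euclidean space $\mathfrak a$, a subspace $V\subset\mathfrak{so}(\mathfrak a)$ with inner product $\langle\cdot,\cdot\rangle$ defines the metric 2-step nilpotent Lie algebra $\mathfrak n=V\oplus\mathfrak a$ (orthogonal sum, $V$ central, $\langle J,[X,Y]\rangle=\langle JX,Y\rangle$). It is a WS-pair if the corresponding simply connected nilpotent Lie group with left-invariant metric is weakly symmetric. Standing fact: this holds iff for every $J\in V$, $X\in\mathfrak a$ there is $N\in\mathcal N(V)=\{N\in O(\mathfrak a): NVN^{-1}\subset V$, $K\mapsto NKN^{-1}$ orthogonal on $(V,\langle\cdot,\cdot\rangle)\}$ with $NX=-X$,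 $NJ=-JN$. *)

From HB Require Import structures.
From mathcomp Require Import all_boot all_order all_algebra.
From mathcomp Require Import reals.
Set Implicit Arguments. Unset Strict Implicit. Unset Printing Implicit Defensive.
Import Order.TTheory GRing.Theory Num.Theory.
Local Open Scope ring_scope.

Section Quat.
Variable R : realType.

(* Quaternions H = R^4 with coordinates w.r.t. the basis (1, i, j, k),
   as column vectors; Hamilton product. *)
Definition qmul (q r : 'cV[R]_4) : 'cV[R]_4 :=
  let a1 := q 0 0 in let b1 := q 1 0 in let c1 := q 2%:R 0 in let d1 := q 3%:R 0 in
  let a2 := r 0 0 in let b2 := r 1 0 in let c2 := r 2%:R 0 in let d2 := r 3%:R 0 in
  \col_(t < 4)
    [:: a1*a2 - b1*b2 - c1*c2 - d1*d2;
        a1*b2 + b1*a2 + c1*d2 - d1*c2;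
        a1*c2 - b1*d2 + c1*a2 + d1*b2;
        a1*d2 + b1*c2 - c1*b2 + d1*a2]`_t.

Definition qI : 'cV[R]_4 := delta_mx 1 0.
Definition qJ : 'cV[R]_4 := delta_mx 2%:R 0.
Definition qK : 'cV[R]_4 := delta_mx 3%:R 0.

Definition Lmat (q : 'cV[R]_4) : 'M[R]_4 :=
  \matrix_(r < 4, c < 4) (qmul q (delta_mx c 0)) r 0.

Definition blockL (p : nat) (c : 'I_p -> R) (q : 'cV[R]_4) : 'M[R]_(\sum_(s < p) 4) :=
  mxdiag (fun s : 'I_p => c s *: Lmat q).

Definition span3 (n : nat) (A B C : 'M[R]_n) (K : 'M[R]_n) : Prop :=
  exists x y z : R, K = x *: A + y *: B + z *: C.

Definition inner_product_on (n : nat) (V : 'M[R]_n -> Prop)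
    (ip : 'M[R]_n -> 'M[R]_n -> R) : Prop :=
  [/\ (forall a u v w, V u -> V v -> V w -> ip (a *: u + v) w = a * ip u w + ip v w),
      (forall u v, V u -> V v -> ip u v = ip v u) &
      (forall u, V u -> u != 0 -> 0 < ip u u)].

Definition in_normalizer (n : nat) (V : 'M[R]_n -> Prop)
    (ip : 'M[R]_n -> 'M[R]_n -> R) (N : 'M[R]_n) : Prop :=
  [/\ N^T *m N = 1%:M,
      (forall K, V K -> V (N *m K *m N^T)) &
      (forall K K', V K -> V K' -> ip (N *m K *m N^T) (N *m K' *m N^T) = ip K K')].

(* WS-pair, via the standing criterion of the paper *)
Definition WS_pair (n : nat) (V : 'M[R]_n -> Prop)
    (ip : 'M[R]_n -> 'M[R]_n -> R) : Prop :=
  forall (J : 'M[R]_n) (X : 'cV[R]_n), V J ->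
    exists N, [/\ in_normalizer V ip N, N *m X = - X & N *m J = - (J *m N)].

End Quat.

(* For a unit quaternion w in span(j, k), conjugation by L_w sends L_i to -L_i and acts on
   span(L_j, L_k) as a reflection; for a suitable such w it negates y L_j + z L_k, so
   K |-> L_w K L_w^T negates J = x J1 + y J2 + z J3, and it is an isometry of V because
   |J2| = |J3|. Right multiplications commute with every L_q, so N = diag(L_w R_(u_s)) acts on V
   in the same way, and u_s := X_s^* w X_s / |X_s|^2 gives w X_s u_s = -X_s, i.e. N X = -X. *)

From HB Require Import structures.
From mathcomp Require Import all_boot all_order all_algebra.
From mathcomp Require Import reals ring lra.
Set Implicit Arguments. Unset Strict Implicit. Unset Printing Implicit Defensive.
Import Order.TTheory GRing.Theory Num.Theory.
Local Open Scope ring_scope.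

Ltac entrywise := apply/matrixP;
  do 2 (case=> [[|[|[|[|[]]]]] ?] //);
  do 2 rewrite ?mxE ?big_ord_recl ?big_ord0 /= ?mxE /=; ring.

Section Quaternions.
Variable R : realType.
Implicit Types (a b c d : R) (p q w X : 'cV[R]_4).

Definition quat a b c d : 'cV[R]_4 := \col_(t < 4) [:: a; b; c; d]`_t.
Definition qconj q := quat (q 0 0) (- q 1 0) (- q 2%:R 0) (- q 3%:R 0).
Definition qnorm q := q 0 0 ^+ 2 + q 1 0 ^+ 2 + q 2%:R 0 ^+ 2 + q 3%:R 0 ^+ 2.
Definition Rmat q : 'M[R]_4 := \matrix_(r < 4, c < 4) (qmul (delta_mx c 0) q) r 0.

Lemma quatE q : q = quat (q 0 0) (q 1 0) (q 2%:R 0) (q 3%:R 0).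
Proof.
by apply/matrixP=> -[[|[|[|[|[]]]]] ?] // [[|[]] ?] //; rewrite mxE; congr (q _ _); apply: val_inj.
Qed.

Ltac quat_coords q :=
  rewrite (quatE q); move: (q 0 0) (q 1 0) (q 2%:R 0) (q 3%:R 0) => ? ? ? ?.

Lemma qI_quat : qI R = quat 0 1 0 0. Proof. entrywise. Qed.
Lemma qJ_quat : qJ R = quat 0 0 1 0. Proof. entrywise. Qed.
Lemma qK_quat : qK R = quat 0 0 0 1. Proof. entrywise. Qed.

Lemma qmul_quat a b c d a' b' c' d' : qmul (quat a b c d) (quat a' b' c' d') =
  quat (a*a' - b*b' - c*c' - d*d') (a*b' + b*a' + c*d' - d*c')
       (a*c' - b*d' + c*a' + d*b') (a*d' + b*c' - c*b' + d*a').
Proof. entrywise. Qed.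

Lemma Lmat_quat a b c d : Lmat (quat a b c d) =
  \matrix_(i < 4, j < 4) (nth [::] [:: [:: a; -b; -c; -d]; [:: b; a; -d; c];
                                      [:: c; d; a; -b]; [:: d; -c; b; a]] i)`_j.
Proof. entrywise. Qed.

Lemma Rmat_quat a b c d : Rmat (quat a b c d) =
  \matrix_(i < 4, j < 4) (nth [::] [:: [:: a; -b; -c; -d]; [:: b; a; d; -c];
                                      [:: c; -d; a; b]; [:: d; c; -b; a]] i)`_j.
Proof. entrywise. Qed.

Lemma Lmat_mul p q : Lmat p *m q = qmul p q.
Proof. quat_coords p; quat_coords q; rewrite Lmat_quat; entrywise. Qed.

Lemma Rmat_mul p q : Rmat p *m q = qmul q p.
Proof. quat_coords p; quat_coords q; rewrite Rmat_quat; entrywise. Qed.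

Lemma Lmat_Rmat_comm p q : Lmat p *m Rmat q = Rmat q *m Lmat p.
Proof. quat_coords p; quat_coords q; rewrite Lmat_quat Rmat_quat; entrywise. Qed.

Lemma Lmat_orth q : (Lmat q)^T *m Lmat q = (qnorm q)%:M.
Proof. quat_coords q; rewrite Lmat_quat /qnorm; entrywise. Qed.

Lemma Rmat_orth q : (Rmat q)^T *m Rmat q = (qnorm q)%:M.
Proof. quat_coords q; rewrite Rmat_quat /qnorm; entrywise. Qed.

Lemma qnormM p q : qnorm (qmul p q) = qnorm p * qnorm q.
Proof. quat_coords p; quat_coords q; rewrite qmul_quat /qnorm !mxE /=; ring. Qed.

Lemma qnorm_conj q : qnorm (qconj q) = qnorm q.
Proof. rewrite /qnorm /qconj !mxE /=; ring. Qed.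

Lemma qnorm_eq0 q : qnorm q = 0 -> q = 0.
Proof.
rewrite (quatE q) /qnorm; move: (q 0 0) (q 1 0) (q 2%:R 0) (q 3%:R 0) => a b c d.
rewrite !mxE /= => n0.
have [-> -> -> ->] : [/\ a = 0, b = 0, c = 0 & d = 0] by split; nra.
entrywise.
Qed.

(* For pure [w]: [w X (X^* w X) = |X|^2 w^2 X] and [w^2 = -|w|^2]. *)
Lemma qmul_flip w X : w 0 0 = 0 ->
  qmul w (qmul X (qmul (qmul (qconj X) w) X)) = - (qnorm X * qnorm w) *: X.
Proof.
quat_coords w; quat_coords X; rewrite mxE /= => ->.
rewrite /qconj /qnorm !mxE /= !qmul_quat; entrywise.
Qed.

Lemma right_mult_flip w X : w 0 0 = 0 -> qnorm w = 1 ->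
  exists Q : 'M[R]_4, [/\ Q^T *m Q = 1%:M,
    forall q, Q *m Lmat q = Lmat q *m Q & Lmat w *m Q *m X = - X].
Proof.
move=> w_pure w_unit; have [/qnorm_eq0 ->|nX] := eqVneq (qnorm X) 0.
  by exists 1%:M; rewrite trmx1 mul1mx mulmx0 oppr0; split=> // q; rewrite mul1mx mulmx1.
pose u := qmul (qmul (qconj X) w) X.
exists ((qnorm X)^-1 *: Rmat u); split.
- rewrite [(_ *: _)^T]linearZ /= -scalemxAl -scalemxAr Rmat_orth scalerA scale_scalar_mx.
  rewrite !qnormM qnorm_conj w_unit; congr (_%:M); field; exact: nX.
- by move=> q; rewrite -scalemxAl -scalemxAr Lmat_Rmat_comm.
- rewrite -scalemxAr -scalemxAl -mulmxA Rmat_mul Lmat_mul qmul_flip // w_unit.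
  by rewrite mulr1 scalerA mulrN mulVf // scaleN1r.
Qed.

Section ConjugationByPureUnit.
Variables w2 w3 : R.
Hypothesis w_unit : w2 ^+ 2 + w3 ^+ 2 = 1.
Let Lw := Lmat (quat 0 0 w2 w3).
Let al := w2 ^+ 2 - w3 ^+ 2.
Let be := 2 * w2 * w3.

Lemma conj_Lmat_qI : Lw *m Lmat (qI R) *m Lw^T = - Lmat (qI R).
Proof.
have -> : - Lmat (qI R) = - ((w2 ^+ 2 + w3 ^+ 2) *: Lmat (qI R)) by rewrite w_unit scale1r.
by rewrite /Lw qI_quat !Lmat_quat; entrywise.
Qed.

Lemma conj_Lmat_qJ : Lw *m Lmat (qJ R) *m Lw^T = al *: Lmat (qJ R) + be *: Lmat (qK R).
Proof. by rewrite /Lw /al /be qJ_quat qK_quat !Lmat_quat; entrywise. Qed.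

Lemma conj_Lmat_qK : Lw *m Lmat (qK R) *m Lw^T = be *: Lmat (qJ R) - al *: Lmat (qK R).
Proof. by rewrite /Lw /al /be qJ_quat qK_quat !Lmat_quat; entrywise. Qed.

End ConjugationByPureUnit.
End Quaternions.

Lemma mul_mxdiag (R : pzSemiRingType) (p : nat) (p_ : 'I_p -> nat)
    (A B : forall i, 'M[R]_(p_ i)) :
  mxdiag A *m mxdiag B = mxdiag (fun i => A i *m B i).
Proof.
have -> : mxdiag B = \mxblock_(i, j) (if i == j then conform_mx 0 (B i) else 0) by [].
rewrite mul_mxdiag_mxblock /mxdiag; apply: eq_mxblock => i j.
by case: eqVneq => [<-|]; rewrite ?conform_mx_id ?mulmx0.
Qed.

Lemma scale_mxdiag (R : comPzRingType) (p : nat) (p_ : 'I_p -> nat)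
    (a : R) (A : forall i, 'M[R]_(p_ i)) :
  a *: mxdiag A = mxdiag (fun i => a *: A i).
Proof.
rewrite -mul_scalar_mx -(mxdiagZ (p_ := p_)) mul_mxdiag.
by apply: eq_mxdiag => i; rewrite mul_scalar_mx.
Qed.

Lemma mxdiag_flip (R : pzRingType) (p : nat) (p_ : 'I_p -> nat)
    (D : forall i, 'M[R]_(p_ i)) (X : 'cV[R]_(\sum_i p_ i)) :
  (forall i, D i *m submxcol X i = - submxcol X i) -> mxdiag D *m X = - X.
Proof.
move=> D_flip; rewrite -[X]submxcolK mul_mxdiag_mxcol -mxcolN.
exact: eq_mxcol.
Qed.

Lemma conj_opp_anticomm (R : pzRingType) (n : nat) (N J : 'M[R]_n) :
  N^T *m N = 1%:M -> N *m J *m N^T = - J -> N *m J = - (J *m N).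
Proof. by move=> N_orth NJ; rewrite -[N *m J]mulmx1 -N_orth mulmxA NJ mulNmx. Qed.

Section BlockDiagonal.
Variables (R : realType) (p : nat).
Implicit Types (c : 'I_p -> R) (a b : R) (q r : 'cV[R]_4).

Lemma blockL_comb c a b q r :
  mxdiag (fun s => c s *: (a *: Lmat q + b *: Lmat r)) = a *: blockL c q + b *: blockL c r.
Proof.
rewrite /blockL !scale_mxdiag -mxdiagD; apply: eq_mxdiag => s.
by rewrite scalerDr !scalerA mulrC [b * _]mulrC.
Qed.

Variables (M : 'M[R]_4) (Q : 'I_p -> 'M[R]_4).
Hypothesis Q_orth : forall s, (Q s)^T *m Q s = 1%:M.
Hypothesis Q_comm : forall s q, Q s *m Lmat q = Lmat q *m Q s.
Let N : 'M[R]_(\sum_(s < p) 4) := mxdiag (fun s => M *m Q s).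

Lemma blockdiag_orth : M^T *m M = 1%:M -> N^T *m N = 1%:M.
Proof.
move=> M_orth; rewrite tr_mxdiag mul_mxdiag -(mxdiagZ (p_ := fun _ : 'I_p => 4%N)).
apply: eq_mxdiag => s; rewrite trmx_mul -mulmxA (mulmxA M^T) M_orth mul1mx.
exact: Q_orth.
Qed.

Lemma blockdiag_conj_blockL c q :
  N *m blockL c q *m N^T = mxdiag (fun s => c s *: (M *m Lmat q *m M^T)).
Proof.
rewrite /blockL tr_mxdiag !mul_mxdiag; apply: eq_mxdiag => s.
rewrite -scalemxAr -scalemxAl trmx_mul -!mulmxA (mulmxA (Q s)) Q_comm.
by rewrite -mulmxA (mulmxA (Q s)) (mulmx1C (Q_orth s)) mul1mx.
Qed.

End BlockDiagonal.

Section ReflectionNormalizer.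
Variables (R : realType) (n : nat) (A B C : 'M[R]_n).

Lemma span3_conj (N : 'M[R]_n) (al be a b c : R) :
  N *m A *m N^T = - A -> N *m B *m N^T = al *: B + be *: C ->
  N *m C *m N^T = be *: B - al *: C ->
  N *m (a *: A + b *: B + c *: C) *m N^T
    = (- a) *: A + (al * b + be * c) *: B + (be * b - al * c) *: C.
Proof.
move=> NA NB NC; rewrite !mulmxDr !mulmxDl -!scalemxAr -!scalemxAl NA NB NC.
by apply/matrixP => i j; rewrite !mxE; ring.
Qed.

Variable ip : 'M[R]_n -> 'M[R]_n -> R.
Hypothesis ip_V : inner_product_on (span3 A B C) ip.
Hypotheses (oAB : ip A B = 0) (oAC : ip A C = 0) (oBC : ip B C = 0).

Lemma ip_span3 a b c a' b' c' :
  ip (a *: A + b *: B + c *: C) (a' *: A + b' *: B + c' *: C)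
    = a * a' * ip A A + b * b' * ip B B + c * c' * ip C C.
Proof.
have [ipD ipC _] := ip_V.
have inV a1 b1 c1 : span3 A B C (a1 *: A + b1 *: B + c1 *: C) by exists a1, b1, c1.
have VA : span3 A B C A by exists 1, 0, 0; rewrite !scale0r !addr0 scale1r.
have VB : span3 A B C B by exists 0, 1, 0; rewrite !scale0r addr0 add0r scale1r.
have VC : span3 A B C C by exists 0, 0, 1; rewrite !scale0r !add0r scale1r.
have V0 : span3 A B C 0 by exists 0, 0, 0; rewrite !scale0r !addr0.
have VBC b1 c1 : span3 A B C (b1 *: B + c1 *: C) by exists 0, b1, c1; rewrite scale0r add0r.
have VC' c1 : span3 A B C (c1 *: C) by exists 0, 0, c1; rewrite !scale0r !add0r.
have ip0 W : span3 A B C W -> ip 0 W = 0.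
  move=> VW; have := ipD 1 0 0 W V0 V0 VW; rewrite scaler0 addr0 mul1r.
  by move/(canLR (addrK (ip 0 W))); rewrite subrr.
have ipl a1 b1 c1 W : span3 A B C W ->
    ip (a1 *: A + b1 *: B + c1 *: C) W = a1 * ip A W + b1 * ip B W + c1 * ip C W.
  move=> VW; rewrite -addrA (ipD _ _ _ _ VA (VBC b1 c1) VW) (ipD _ _ _ _ VB (VC' c1) VW).
  by rewrite -[c1 *: C]addr0 (ipD _ _ _ _ VC V0 VW) ip0 // addr0 !addrA.
rewrite ipl ?inV // (ipC _ _ VA) ?inV // (ipC _ _ VB) ?inV // (ipC _ _ VC) ?inV //.
rewrite !ipl // (ipC _ _ VB VA) (ipC _ _ VC VA) (ipC _ _ VC VB) oAB oAC oBC; ring.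
Qed.

Lemma reflection_in_normalizer (N : 'M[R]_n) (al be : R) :
  ip B B = ip C C -> al ^+ 2 + be ^+ 2 = 1 -> N^T *m N = 1%:M ->
  N *m A *m N^T = - A -> N *m B *m N^T = al *: B + be *: C ->
  N *m C *m N^T = be *: B - al *: C ->
  in_normalizer (span3 A B C) ip N.
Proof.
move=> nBC refl N_orth NA NB NC.
split=> // [K [a [b [c ->]]]|K K' [a [b [c ->]]] [a' [b' [c' ->]]]].
  by rewrite (span3_conj _ _ _ NA NB NC); eexists; eexists; eexists.
rewrite !(span3_conj _ _ _ NA NB NC) !ip_span3 -nBC.
apply/eqP; rewrite -subr_eq0; apply/eqP.
transitivity ((b * b' + c * c') * ip B B * (al ^+ 2 + be ^+ 2 - 1)); first by ring.
by rewrite refl subrr mulr0.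
Qed.

End ReflectionNormalizer.

(* [(w2^2 - w3^2, 2 w2 w3)] is [(cos 2t, sin 2t)] for [(w2, w3) = (cos t, sin t)], so the
   reflection in the statement fixes the line through [(w2, w3)]; take it orthogonal to [(y, z)]. *)
Lemma reflection_flip_exists (R : realType) (y z : R) : exists w2 w3 : R,
  [/\ w2 ^+ 2 + w3 ^+ 2 = 1, (w2 ^+ 2 - w3 ^+ 2) * y + 2 * w2 * w3 * z = - y
    & 2 * w2 * w3 * y - (w2 ^+ 2 - w3 ^+ 2) * z = - z].
Proof.
have [yz0|yz_neq0] := eqVneq (y ^+ 2 + z ^+ 2) 0.
  have [-> ->] : y = 0 /\ z = 0 by split; nra.
  by exists 1, 0; split; ring.
pose t := (Num.sqrt (y ^+ 2 + z ^+ 2))^-1.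
have t2 : t ^+ 2 * (y ^+ 2 + z ^+ 2) = 1.
  by rewrite /t exprVn sqr_sqrtr ?mulVf //; nra.
exists (- z * t), (y * t); split.
- by rewrite -t2; ring.
- by transitivity (- y * (t ^+ 2 * (y ^+ 2 + z ^+ 2))); [ring | rewrite t2 mulr1].
- by transitivity (- z * (t ^+ 2 * (y ^+ 2 + z ^+ 2))); [ring | rewrite t2 mulr1].
Qed.

Theorem mainTheorem4 (R : realType) (p : nat) (lam mu : 'I_p -> R)
  (ip : 'M[R]_(\sum_(s < p) 4) -> 'M[R]_(\sum_(s < p) 4) -> R) :
  (forall s, lam s != 0) -> (forall s, mu s != 0) ->
  let J1 := blockL lam (qI R) in
  let J2 := blockL mu (qJ R) in
  let J3 := blockL mu (qK R) in
  let V := span3 J1 J2 J3 in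
  inner_product_on V ip ->
  ip J1 J2 = 0 -> ip J1 J3 = 0 -> ip J2 J3 = 0 ->
  ip J2 J2 = ip J3 J3 ->
  WS_pair V ip.
Proof.
move=> _ _ J1 J2 J3 V ip_V o12 o13 o23 n23 J X [x [y [z ->]]].
have [w2 [w3 [w_unit flip_y flip_z]]] := reflection_flip_exists y z.
set w := quat 0 0 w2 w3.
have w_pure : w 0 0 = 0 by rewrite mxE.
have qnorm_w : qnorm w = 1 by rewrite -w_unit /qnorm !mxE /=; ring.
have [Q /all_and3 [Q_orth Q_comm Q_flip]] :=
  fin_all_exists (fun s => right_mult_flip (submxcol (p_ := fun _ => 4%N) X s) w_pure qnorm_w).
pose N := mxdiag (fun s => Lmat w *m Q s).
have N_orth : N^T *m N = 1%:M.
  by apply: blockdiag_orth Q_orth _; rewrite Lmat_orth qnorm_w.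
have NJ1 : N *m J1 *m N^T = - J1.
  rewrite (blockdiag_conj_blockL _ Q_orth Q_comm).
  under eq_mxdiag do rewrite conj_Lmat_qI // scalerN.
  by rewrite mxdiagN.
have NJ2 : N *m J2 *m N^T = (w2 ^+ 2 - w3 ^+ 2) *: J2 + (2 * w2 * w3) *: J3.
  rewrite (blockdiag_conj_blockL _ Q_orth Q_comm).
  by under eq_mxdiag do rewrite conj_Lmat_qJ; exact: blockL_comb.
have NJ3 : N *m J3 *m N^T = (2 * w2 * w3) *: J2 - (w2 ^+ 2 - w3 ^+ 2) *: J3.
  rewrite (blockdiag_conj_blockL _ Q_orth Q_comm).
  under eq_mxdiag do rewrite conj_Lmat_qK.
  by rewrite -scaleNr blockL_comb scaleNr.
exists N; split.
- apply: reflection_in_normalizer NJ1 NJ2 NJ3 => //.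
  by transitivity ((w2 ^+ 2 + w3 ^+ 2) ^+ 2); [ring | rewrite w_unit expr1n].
- exact: mxdiag_flip.
- apply: conj_opp_anticomm => //.
  by rewrite (span3_conj _ _ _ NJ1 NJ2 NJ3) flip_y flip_z !scaleNr !opprD.
Qed.
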